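(* Let $X$ and $Y$ be separable metrizable spaces and let $f : X \to Y$ be a continuous surjection that is closed--constructible, i.e. for every closed set $F \subseteq X$ the image $f(F)$ is a constructible subset of $Y$. Then $f$ is piece-wise closed: there exist closed sets $Z_1, Z_2, \ldots \subseteq X$ with $X = \bigcup_{n} Z_n$ such that for every $n$ the restriction $f|_{Z_n}$ is a closed map.
   Context: A subset $B \subseteq Y$ is constructible if it belongs to the smallest family of subsets of $Y$ that contains all open sets and is stable under finite intersections and complements (equivalently, $B$ is a finite union of locally closed sets, a locally closed set being the intersection of an open set and a closed set). A function $f: X \to Y$ is closed--constructible if it takes closed subsets of $X$ to constructible subsets of $Y$. A function $f : X \to Y$ is piece-wise closed if $X$ can be written as a countable union of closed sets $Z_n$ such that $f$ is closed on every $Z_n$ (i.e. $f|_{Z_n}$ maps closed subsets of $Z_n$ to closed subsets of $Y$). *)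

From Stdlib Require Import Reals.
Open Scope R_scope.

Definition is_topology {X : Type} (op : (X -> Prop) -> Prop) : Prop :=
  op (fun _ => True) /\
  (forall U V, op U -> op V -> op (fun x => U x /\ V x)) /\
  (forall F : (X -> Prop) -> Prop, (forall U, F U -> op U) ->
      op (fun x => exists U, F U /\ U x)).

Definition is_closed {X : Type} (op : (X -> Prop) -> Prop) (C : X -> Prop) : Prop :=
  op (fun x => ~ C x).

Definition is_metric {X : Type} (d : X -> X -> R) : Prop :=
  (forall x y, 0 <= d x y) /\
  (forall x y, d x y = 0 <-> x = y) /\
  (forall x y, d x y = d y x) /\
  (forall x y z, d x z <= d x y + d y z).

Definition metric_open {X : Type} (d : X -> X -> R) (U : X -> Prop) : Prop :=
  forall x, U x -> exists eps, 0 < eps /\ forall y, d x y < eps -> U y.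

Definition metrizable {X : Type} (op : (X -> Prop) -> Prop) : Prop :=
  exists d : X -> X -> R, is_metric d /\ forall U, op U <-> metric_open d U.

Definition countable_set {X : Type} (D : X -> Prop) : Prop :=
  exists g : X -> nat, forall x y, D x -> D y -> g x = g y -> x = y.

Definition dense {X : Type} (op : (X -> Prop) -> Prop) (D : X -> Prop) : Prop :=
  forall U, op U -> (exists x, U x) -> exists x, U x /\ D x.

Definition separable {X : Type} (op : (X -> Prop) -> Prop) : Prop :=
  exists D, countable_set D /\ dense op D.

Definition continuous {X Y : Type} (opX : (X -> Prop) -> Prop)
  (opY : (Y -> Prop) -> Prop) (f : X -> Y) : Prop :=
  forall V, opY V -> opX (fun x => V (f x)).

Definition image {X Y : Type} (f : X -> Y) (A : X -> Prop) : Y -> Prop :=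
  fun y => exists x, A x /\ f x = y.

(* Subsets are
   predicates, so we also close under extensional equality of subsets. *)
Inductive constructible {Y : Type} (op : (Y -> Prop) -> Prop) : (Y -> Prop) -> Prop :=
  | constr_open : forall U, op U -> constructible op U
  | constr_inter : forall A B, constructible op A -> constructible op B ->
      constructible op (fun y => A y /\ B y)
  | constr_compl : forall A, constructible op A -> constructible op (fun y => ~ A y)
  | constr_ext : forall A B, (forall y, A y <-> B y) -> constructible op A ->
      constructible op B.

Definition closed_constructible {X Y : Type} (opX : (X -> Prop) -> Prop)
  (opY : (Y -> Prop) -> Prop) (f : X -> Y) : Prop :=
  forall F, is_closed opX F -> constructible opY (image f F).

Definition closed_in_subspace {X : Type} (opX : (X -> Prop) -> Prop)
  (Z C : X -> Prop) : Prop :=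
  (forall x, C x -> Z x) /\
  exists F, is_closed opX F /\ forall x, C x <-> (F x /\ Z x).

Definition closed_on {X Y : Type} (opX : (X -> Prop) -> Prop)
  (opY : (Y -> Prop) -> Prop) (f : X -> Y) (Z : X -> Prop) : Prop :=
  forall C, closed_in_subspace opX Z C -> is_closed opY (image f C).

Definition piecewise_closed {X Y : Type} (opX : (X -> Prop) -> Prop)
  (opY : (Y -> Prop) -> Prop) (f : X -> Y) : Prop :=
  exists Z : nat -> X -> Prop,
    (forall n, is_closed opX (Z n)) /\
    (forall x, exists n, Z n x) /\
    (forall n, closed_on opX opY f (Z n)).

(* Fix metrics on X and Y.  The proof has three parts.
   1. Constructible subsets of a metric space are "locally decided": every
      nonempty closed set C has a nonempty relatively open piece on which
      the set is either everywhere true or everywhere false.  By hypothesis the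
      image of every closed set is therefore locally decided.
   2. (Section Core)  Let K be a set on which f is nowhere closed, i.e. no
      relative closed ball of K is mapped closedly.  If K had a point, we
      could grow a countably branching tree of points of K, with nested and
      separated balls, such that the image of the closure F of the tree is
      not locally decided on the closure of a set of limit points of the
      images; this contradicts part 1.  Hence such a K is empty.
   3. (Section Lindelof)  Call a closed set good if f is closed on it.  By
      separability, the set G of points having a closed ball covered by
      countably many good sets is itself so covered, and its complement B is
      closed.  f is nowhere closed on B, for otherwise a ball of B together
      with the cover of G would put its centre in G.  By part 2, B is empty,
      so the countable cover of G = X is the required decomposition. *)
From Stdlib Require Import Reals Lra Lia List Classical ClassicalEpsilon Cantor.
Open Scope R_scope.

Section Metric.
Context {T : Type} (d : T -> T -> R) (hd : is_metric d).

Lemma d_pos x y : 0 <= d x y. Proof. apply hd. Qed.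
Lemma d_refl x : d x x = 0. Proof. apply (proj1 (proj2 hd)). reflexivity. Qed.
Lemma d_sym x y : d x y = d y x. Proof. apply hd. Qed.
Lemma d_tri x y z : d x z <= d x y + d y z. Proof. apply hd. Qed.
Lemma d_eq x y : d x y = 0 -> x = y. Proof. apply (proj1 (proj2 hd)). Qed.

Lemma d_pos_neq x y : x <> y -> 0 < d x y.
Proof.
  intros hne. destruct (Rle_lt_or_eq_dec 0 _ (d_pos x y)) as [h|h]; auto.
  exfalso. apply hne. apply d_eq. auto.
Qed.

Definition mclosed (S : T -> Prop) : Prop := metric_open d (fun x => ~ S x).

Definition mclosure (S : T -> Prop) : T -> Prop :=
  fun x => forall e, 0 < e -> exists y, d x y < e /\ S y.

Lemma mopen_full : metric_open d (fun _ => True).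
Proof. intros x _. exists 1. split; [lra | auto]. Qed.

Lemma mopen_inter U V :
  metric_open d U -> metric_open d V -> metric_open d (fun x => U x /\ V x).
Proof.
  intros hU hV x [Ux Vx].
  destruct (hU x Ux) as [e1 [he1 H1]]. destruct (hV x Vx) as [e2 [he2 H2]].
  exists (Rmin e1 e2). split; [apply Rmin_glb_lt; auto |].
  intros y hy. split; [apply H1 | apply H2]; eapply Rlt_le_trans; eauto;
    [apply Rmin_l | apply Rmin_r].
Qed.

Lemma mopen_ball x r : metric_open d (fun y => d x y < r).
Proof.
  intros y hy. exists (r - d x y). split; [lra |].
  intros z hz. pose proof (d_tri x y z). lra.
Qed.

Lemma mclosed_cball x r : mclosed (fun y => d x y <= r).
Proof.
  intros y hy. exists (d x y - r). split; [lra |].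
  intros z hz hz'. pose proof (d_tri x z y). rewrite (d_sym z y) in H. lra.
Qed.

Lemma mclosed_empty : mclosed (fun _ => False).
Proof. intros x _. exists 1. split; [lra | auto]. Qed.

Lemma mclosed_inter A B : mclosed A -> mclosed B -> mclosed (fun x => A x /\ B x).
Proof.
  intros hA hB x hx. destruct (classic (A x)) as [Ax | nAx].
  - assert (nBx : ~ B x) by tauto. destruct (hB x nBx) as [e [he H]].
    exists e. split; auto. intros y hy [_ By]. exact (H y hy By).
  - destruct (hA x nAx) as [e [he H]].
    exists e. split; auto. intros y hy [Ay _]. exact (H y hy Ay).
Qed.

Lemma mclosed_closure S : mclosed (mclosure S).
Proof.
  intros x hx. apply not_all_ex_not in hx. destruct hx as [e he].
  apply imply_to_and in he. destruct he as [he he2].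
  exists (e / 2). split; [lra |]. intros z hz hz2. apply he2.
  destruct (hz2 (e / 2)) as [w [hw Sw]]; [lra |]. exists w. split; auto.
  pose proof (d_tri x z w). lra.
Qed.

Lemma subset_closure (S : T -> Prop) x : S x -> mclosure S x.
Proof. intros Sx e he. exists x. rewrite d_refl. auto. Qed.

Lemma not_mclosed S :
  ~ mclosed S -> exists y, ~ S y /\ mclosure S y.
Proof.
  intros h. unfold mclosed, metric_open in h. apply not_all_ex_not in h.
  destruct h as [y hy]. apply imply_to_and in hy. destruct hy as [hy1 hy2].
  exists y. split; auto. intros e he. apply NNPP. intros hc. apply hy2.
  exists e. split; auto. intros z hz Sz. apply hc. exists z. auto.
Qed.

(* This is the only property of constructible sets the proof uses. *)
Definition locally_decided (A : T -> Prop) : Prop :=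
  forall C, mclosed C -> (exists y, C y) ->
  exists U, metric_open d U /\ (exists y, U y /\ C y) /\
    ((forall y, U y -> C y -> A y) \/ (forall y, U y -> C y -> ~ A y)).

Lemma locally_decided_open U : metric_open d U -> locally_decided U.
Proof.
  intros hU C hC [y0 Cy0].
  destruct (classic (exists y, U y /\ C y)) as [[y [Uy Cy]] | hn].
  - exists U. split; [exact hU |]. split; [exists y; auto | left; auto].
  - exists (fun _ => True). split; [apply mopen_full |].
    split; [exists y0; auto |].
    right. intros y _ Cy Uy. apply hn. exists y; auto.
Qed.

(* For an intersection, first decide A on C, then decide B on the closure of
   the piece where A holds. *)
Lemma locally_decided_inter A B :
  locally_decided A -> locally_decided B -> locally_decided (fun y => A y /\ B y).
Proof.
  intros hA hB C hC hne.
  destruct (hA C hC hne) as [U1 [hU1 [[y1 [U1y1 Cy1]] [inA | outA]]]].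
  - set (C2 := mclosure (fun y => U1 y /\ C y)).
    assert (sub : forall y, U1 y -> C y -> C2 y) by (intros y ? ?; apply subset_closure; auto).
    destruct (hB C2 (mclosed_closure _) (ex_intro _ y1 (sub y1 U1y1 Cy1)))
      as [U2 [hU2 [[y2 [U2y2 C2y2]] decB]]].
    exists (fun x => U1 x /\ U2 x). split; [apply mopen_inter; auto |]. split.
    { destruct (hU2 y2 U2y2) as [e [he He]].
      destruct (C2y2 e he) as [w [hw [U1w Cw]]]. exists w. auto. }
    destruct decB as [inB | outB].
    + left. intros y [U1y U2y] Cy. split; auto.
    + right. intros y [U1y U2y] Cy [_ By]. exact (outB y U2y (sub y U1y Cy) By).
  - exists U1. split; [exact hU1 |]. split; [exists y1; auto |].
    right. intros y U1y Cy [Ay _]. exact (outA y U1y Cy Ay).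
Qed.

Lemma locally_decided_compl A :
  locally_decided A -> locally_decided (fun y => ~ A y).
Proof.
  intros hA C hC hne. destruct (hA C hC hne) as [U [hU [hne2 [h | h]]]];
    exists U; (split; [exact hU |]); (split; [exact hne2 |]).
  - right. intros y Uy Cy hn. exact (hn (h y Uy Cy)).
  - left. exact h.
Qed.

Lemma locally_decided_ext A B :
  (forall y, A y <-> B y) -> locally_decided A -> locally_decided B.
Proof.
  intros hAB hA C hC hne. destruct (hA C hC hne) as [U [hU [hne2 [h | h]]]];
    exists U; (split; [exact hU |]); (split; [exact hne2 |]).
  - left. intros y Uy Cy. apply hAB. auto.
  - right. intros y Uy Cy hn. apply hAB in hn. exact (h y Uy Cy hn).
Qed.

Lemma constructible_locally_decided (op : (T -> Prop) -> Prop)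
  (hop : forall U, op U <-> metric_open d U) A :
  constructible op A -> locally_decided A.
Proof.
  induction 1.
  - apply locally_decided_open, hop. assumption.
  - apply locally_decided_inter; assumption.
  - apply locally_decided_compl; assumption.
  - eapply locally_decided_ext; eassumption.
Qed.

End Metric.

Lemma inv_pos n : 0 < / INR (S n).
Proof. apply Rinv_0_lt_compat, lt_0_INR. lia. Qed.

Lemma inv_tail e : 0 < e -> exists N, forall n, (N <= n)%nat -> / INR (S n) < e.
Proof.
  intros he. destruct (archimed_cor1 e he) as [N [h1 h2]]. exists N. intros n hn.
  eapply Rle_lt_trans; [| exact h1]. apply Rinv_le_contravar.
  - apply lt_0_INR. auto.
  - apply le_INR. lia.
Qed.

Lemma quarter_decay_lt (u : nat -> R) :
  (forall n, 0 < u n) -> (forall n, u (S n) < u n / 4) ->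
  forall n n', (n < n')%nat -> u n' < u n / 4.
Proof.
  intros hpos hs n n' hlt. induction n' as [| k IH]; [lia |].
  destruct (Nat.eq_dec n k) as [-> | hne]; [apply hs |].
  assert (u k < u n / 4) by (apply IH; lia). pose proof (hs k). pose proof (hpos k). lra.
Qed.

Lemma quarter_decay_le (u : nat -> R) :
  (forall n, 0 < u n) -> (forall n, u (S n) < u n / 4) ->
  forall n n', (n <= n')%nat -> u n' <= u n.
Proof.
  intros hpos hs n n' hle. destruct (Nat.eq_dec n n') as [-> | hne]; [lra |].
  assert (u n' < u n / 4) by (apply quarter_decay_lt; auto; lia). pose proof (hpos n). lra.
Qed.

Lemma fast_decreasing_seq {A : Type} (Q : A -> Prop) (mu : A -> R) (e0 : R) :
  0 < e0 -> (forall e, 0 < e -> exists a, Q a /\ 0 < mu a /\ mu a < e) ->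
  exists s : nat -> A,
    (forall n, Q (s n) /\ 0 < mu (s n) /\ mu (s n) < / INR (S n)) /\
    mu (s 0%nat) < e0 /\ (forall n, mu (s (S n)) < mu (s n) / 4).
Proof.
  intros he0 small.
  assert (choice : exists p : R -> A, forall e, 0 < e -> Q (p e) /\ 0 < mu (p e) /\ mu (p e) < e).
  { apply (choice (fun e a => 0 < e -> Q a /\ 0 < mu a /\ mu a < e)). intros e.
    destruct (Rlt_dec 0 e) as [he | he].
    - destruct (small e he) as [a ha]. exists a. auto.
    - destruct (small 1 Rlt_0_1) as [a _]. exists a. intros h. contradiction. }
  destruct choice as [p hp].
  set (s := fix s n := match n with
                       | O => p (Rmin e0 1)
                       | S k => p (Rmin (mu (s k) / 4) (/ INR (S (S k)))) end).
  assert (step : forall k, 0 < mu (s k) ->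
            let a := s (S k) in Q a /\ 0 < mu a /\ mu a < Rmin (mu (s k) / 4) (/ INR (S (S k)))).
  { intros k hk. apply hp. apply Rmin_glb_lt; [lra | apply inv_pos]. }
  assert (first : Q (s 0%nat) /\ 0 < mu (s 0%nat) /\ mu (s 0%nat) < Rmin e0 1).
  { apply hp. apply Rmin_glb_lt; lra. }
  assert (inv : forall n, Q (s n) /\ 0 < mu (s n) /\ mu (s n) < / INR (S n)).
  { induction n as [| k IH].
    - destruct first as [q1 [q2 q3]]. pose proof (Rmin_r e0 1).
      assert (/ INR 1 = 1) by (simpl; lra). split; [| split]; auto; lra.
    - destruct (step k (proj1 (proj2 IH))) as [q1 [q2 q3]].
      pose proof (Rmin_r (mu (s k) / 4) (/ INR (S (S k)))). split; [| split]; auto; lra. }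
  exists s. split; [exact inv | split].
  - destruct first as [_ [_ q3]]. pose proof (Rmin_l e0 1). lra.
  - intros k. destruct (step k (proj1 (proj2 (inv k)))) as [_ [_ q3]].
    pose proof (Rmin_l (mu (s k) / 4) (/ INR (S (S k)))). lra.
Qed.

Lemma finite_min_pos (g : nat -> R) :
  (forall n, 0 < g n) -> forall M, exists h, 0 < h /\ forall n, (n < M)%nat -> h <= g n.
Proof.
  intros hg M. induction M as [| M [h [hh Hh]]].
  - exists 1. split; [lra |]. intros n hn. lia.
  - exists (Rmin h (g M)). split; [apply Rmin_glb_lt; auto |].
    intros n hn. destruct (Nat.eq_dec n M) as [-> | hne]; [apply Rmin_r |].
    eapply Rle_trans; [apply Rmin_l | apply Hh; lia].
Qed.

Definition mclosed_on {X Y : Type} (dX : X -> X -> R) (dY : Y -> Y -> R)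
  (f : X -> Y) (Z : X -> Prop) : Prop :=
  forall C, (forall x, C x -> Z x) -> mclosed dX C -> mclosed dY (image f C).

Definition escapes {X : Type} (dX : X -> X -> R) (c : nat -> X) : Prop :=
  forall z, exists eta, 0 < eta /\ exists N, forall n, (N <= n)%nat -> eta <= dX z (c n).

Section Core.
Context {X Y : Type} (dX : X -> X -> R) (dY : Y -> Y -> R)
  (hdX : is_metric dX) (hdY : is_metric dY) (f : X -> Y)
  (fcont : forall x e, 0 < e ->
     exists eta, 0 < eta /\ forall y, dX x y < eta -> dY (f x) (f y) < e).

Ltac triY a b c := let T := fresh "T" in pose proof (d_tri dY hdY a b c) as T.
Ltac triX a b c := let T := fresh "T" in pose proof (d_tri dX hdX a b c) as T.

(* If the images of a sequence in a closed set C converge to a point outside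
   f(C), the sequence escapes: a cluster point would lie in C and, by
   continuity, be mapped onto the limit. *)
Lemma escapes_of_image_limit (C : X -> Prop) (c : nat -> X) (y : Y) :
  mclosed dX C -> (forall n, C (c n)) -> ~ image f C y ->
  (forall n, dY y (f (c n)) < / INR (S n)) -> escapes dX c.
Proof.
  intros hC Cc hy lim z. apply NNPP. intros hn.
  assert (cluster : forall eta, 0 < eta -> forall N, exists n, (N <= n)%nat /\ dX z (c n) < eta).
  { intros e he N. apply NNPP. intros hn2. apply hn. exists e. split; auto. exists N.
    intros n hnN. apply Rnot_lt_le. intros hlt. apply hn2. exists n. auto. }
  assert (Cz : C z).
  { apply NNPP. intros nCz. destruct (hC z nCz) as [e [he He]].
    destruct (cluster e he 0%nat) as [n [_ hn2]]. exact (He (c n) hn2 (Cc n)). }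
  apply hy. exists z. split; auto. apply (d_eq dY hdY).
  apply Rle_antisym; [| apply (d_pos dY hdY)]. apply Rnot_lt_le. intros ht.
  assert (ht2 : 0 < dY (f z) y / 2) by lra.
  destruct (fcont z _ ht2) as [e1 [he1 He1]]. destruct (inv_tail _ ht2) as [N HN].
  destruct (cluster e1 he1 N) as [n [hnN hdn]].
  pose proof (He1 _ hdn). pose proof (HN n hnN). pose proof (lim n).
  triY (f z) (f (c n)) y. rewrite (d_sym dY hdY (f (c n)) y) in T. lra.
Qed.

Variable K : X -> Prop.
Hypothesis Hbad : forall x, K x -> forall r, 0 < r ->
  ~ mclosed_on dX dY f (fun y => K y /\ dX x y <= r).

Lemma bad_not_locally_constant x r :
  K x -> 0 < r -> exists x', K x' /\ dX x x' < r /\ f x' <> f x.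
Proof.
  intros Kx hr. apply NNPP. intros hn. apply (Hbad x Kx (r / 2)); [lra |].
  assert (const : forall c, K c /\ dX x c <= r / 2 -> f c = f x).
  { intros c [Kc hc]. apply NNPP. intros hne. apply hn. exists c. split; auto. split; auto. lra. }
  intros C hCZ hC y hy.
  destruct (classic (y = f x)) as [-> | hne].
  - exists 1. split; [lra |]. intros z _ [c [Cc <-]]. apply hy. exists c. split; [exact Cc |].
    apply const, hCZ, Cc.
  - exists (dY y (f x)). split; [apply (d_pos_neq dY hdY), hne |].
    intros z hz [c [Cc <-]]. rewrite (const c (hCZ c Cc)) in hz. lra.
Qed.

Lemma close_point_distinct_image x R e : K x -> 0 < R -> 0 < e ->
  exists x', (K x' /\ dX x x' < R / 4) /\ 0 < dY (f x) (f x') /\ dY (f x) (f x') < e.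
Proof.
  intros Kx hR he. destruct (fcont x e he) as [eta [heta Heta]].
  destruct (bad_not_locally_constant x (Rmin eta (R / 4)) Kx) as [x' [Kx' [hd hne]]].
  { apply Rmin_glb_lt; lra. }
  pose proof (Rmin_l eta (R / 4)). pose proof (Rmin_r eta (R / 4)).
  exists x'. split; [split; [auto | lra] |]. split.
  - apply (d_pos_neq dY hdY). auto.
  - apply Heta. lra.
Qed.

(* Near any point x' of K there is an escaping sequence of K whose images
   converge quickly, from outside, to a point y close to f x': it comes
   from a witness that f is not closed on a small ball around x'. *)
Lemma escaping_sequence x' b s : K x' -> 0 < b -> 0 < s ->
  exists (c : nat -> X) (y : Y),
   (forall n, K (c n) /\ dX x' (c n) <= s /\ dY (f x') (f (c n)) < b) /\
   dY (f x') y <= b /\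
   (forall n, 0 < dY y (f (c n)) /\ dY y (f (c n)) < / INR (S n)) /\
   (forall n, dY y (f (c (S n))) < dY y (f (c n)) / 4) /\
   escapes dX c.
Proof.
  intros Kx' hb hs. destruct (fcont x' b hb) as [eta [heta Heta]].
  set (r := Rmin (eta / 2) s).
  assert (hr : 0 < r) by (apply Rmin_glb_lt; lra).
  assert (hr1 : r <= eta / 2) by apply Rmin_l. assert (hr2 : r <= s) by apply Rmin_r.
  pose proof (Hbad x' Kx' r hr) as hn. unfold mclosed_on in hn.
  apply not_all_ex_not in hn. destruct hn as [C hC].
  apply imply_to_and in hC. destruct hC as [hCZ hC].
  apply imply_to_and in hC. destruct hC as [hCc hC].
  destruct (not_mclosed dY _ hC) as [y [hy happ]].
  assert (near : forall c, C c -> dY (f x') (f c) < b).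
  { intros c Cc. apply Heta. destruct (hCZ c Cc). lra. }
  assert (pick : forall e, 0 < e -> exists c, C c /\ 0 < dY y (f c) /\ dY y (f c) < e).
  { intros e he. destruct (happ e he) as [y' [hy' [c [Cc <-]]]].
    exists c. split; auto. split; auto. apply (d_pos_neq dY hdY).
    intros heq. apply hy. exists c. auto. }
  destruct (fast_decreasing_seq C (fun c => dY y (f c)) 1 Rlt_0_1 pick)
    as [cs [hcs [_ hdec]]].
  exists cs, y. split; [| split; [| split; [| split]]].
  - intros n. destruct (hcs n) as [Cn _]. destruct (hCZ _ Cn) as [h1 h2].
    split; auto. split; [lra | apply near; auto].
  - apply Rnot_lt_le. intros hlt.
    destruct (pick (dY (f x') y - b)) as [c [Cc [_ hc]]]; [lra |].
    pose proof (near c Cc). triY (f x') (f c) y.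
    rewrite (d_sym dY hdY (f c) y) in T. lra.
  - intros n. apply hcs.
  - exact hdec.
  - apply (escapes_of_image_limit C cs y hCc); auto; intros n; apply hcs.
Qed.

(* The contradiction comes from a tree of points of K indexed by finite
   lists of pairs (m, n).  Each node carries a centre in K, a radius in X
   containing the centres of all its descendants, and a radius in Y
   containing their images. *)
Record node := mknode { ctr : X; yrad : R; xrad : R }.

Definition node_ok (a : node) : Prop := K (ctr a) /\ 0 < yrad a /\ 0 < xrad a.

Record children_spec (a : node) (ch : nat -> nat -> node) (ys : nat -> Y) : Prop := {
  ch_ok : forall m n, node_ok (ch m n);
  ch_xnest : forall m n, dX (ctr a) (ctr (ch m n)) + xrad (ch m n) <= xrad a;
  ch_xsmall : forall m n, xrad (ch m n) <= / INR (S n);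
  ch_ynest : forall m n, dY (f (ctr a)) (f (ctr (ch m n))) + yrad (ch m n) <= yrad a;
  ch_sep : forall m n m' n', (m <> m' \/ n <> n') ->
    yrad (ch m n) + yrad (ch m' n') < dY (f (ctr (ch m n))) (f (ctr (ch m' n')));
  ch_far_parent : forall m n, yrad (ch m n) < dY (f (ctr a)) (f (ctr (ch m n)));
  ys_near : forall m, dY (f (ctr a)) (ys m) < yrad a;
  ys_sep : forall m, exists e, 0 < e /\ e <= dY (ys m) (f (ctr a)) /\
    (forall m' n', m' <> m -> yrad (ch m' n') + e <= dY (ys m) (f (ctr (ch m' n'))));
  ys_outside : forall m n, yrad (ch m n) < dY (ys m) (f (ctr (ch m n)));
  ys_limit : forall m e, 0 < e -> exists n, dY (ys m) (f (ctr (ch m n))) < e;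
  ys_converge : forall e, 0 < e -> exists m, dY (f (ctr a)) (ys m) < e;
  ch_escape : forall m, escapes dX (fun n => ctr (ch m n))
}.

Section Children.
Variables (x : X) (dl Rr : R) (xs : nat -> X) (c : nat -> nat -> X) (y : nat -> Y).

Let bb m := dY (f x) (f (xs m)).
Let aa m n := dY (y m) (f (c m n)).

Hypothesis hRr : 0 < Rr.
Hypothesis hxs : forall m, dX x (xs m) < Rr / 4.
Hypothesis bpos : forall m, 0 < bb m.
Hypothesis bsmall : forall m, bb m < / INR (S m).
Hypothesis b0 : bb 0%nat < dl / 2.
Hypothesis bdec : forall m, bb (S m) < bb m / 4.
Hypothesis hc : forall m n,
  K (c m n) /\ dX (xs m) (c m n) <= Rr / 8 /\ dY (f (xs m)) (f (c m n)) < bb m / 8.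
Hypothesis hy : forall m, dY (f (xs m)) (y m) <= bb m / 8.
Hypothesis apos : forall m n, 0 < aa m n /\ aa m n < / INR (S n).
Hypothesis adec : forall m n, aa m (S n) < aa m n / 4.
Hypothesis cesc : forall m, escapes dX (c m).

Definition children m n := mknode (c m n) (aa m n / 4) (Rmin (Rr / 2) (/ INR (S n))).

Lemma bb_order m m' : (m < m')%nat -> bb m' < bb m / 4.
Proof. apply quarter_decay_lt; auto. Qed.

Lemma bb_bound m : bb m < dl / 2.
Proof.
  pose proof (quarter_decay_le bb bpos bdec 0%nat m ltac:(lia)). lra.
Qed.

Lemma aa_order m n n' : (n < n')%nat -> aa m n' < aa m n / 4.
Proof. apply quarter_decay_lt; [intros k; apply apos | apply adec]. Qed.

Lemma c_annulus m n :
  7 * bb m / 8 < dY (f x) (f (c m n)) /\ dY (f x) (f (c m n)) < 9 * bb m / 8.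
Proof.
  destruct (hc m n) as [_ [_ h]]. unfold bb in *.
  triY (f x) (f (xs m)) (f (c m n)). triY (f x) (f (c m n)) (f (xs m)).
  rewrite (d_sym dY hdY (f (c m n)) (f (xs m))) in T0. split; lra.
Qed.

Lemma y_annulus m : 7 * bb m / 8 <= dY (f x) (y m) /\ dY (f x) (y m) <= 9 * bb m / 8.
Proof.
  pose proof (hy m) as h. unfold bb in *.
  triY (f x) (f (xs m)) (y m). triY (f x) (y m) (f (xs m)).
  rewrite (d_sym dY hdY (y m) (f (xs m))) in T0. split; lra.
Qed.

Lemma aa_bound m n : aa m n <= bb m / 4.
Proof.
  destruct (hc m n) as [_ [_ h]]. pose proof (hy m) as h2. unfold aa, bb in *.
  triY (y m) (f (xs m)) (f (c m n)). rewrite (d_sym dY hdY (y m) (f (xs m))) in T. lra.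
Qed.

(* Children with different m lie in different annuli; children with the
   same m are separated because aa m decreases geometrically. *)
Lemma children_separated m n m' n' : (m <> m' \/ n <> n') ->
  aa m n / 4 + aa m' n' / 4 < dY (f (c m n)) (f (c m' n')).
Proof.
  intros hne.
  pose proof (c_annulus m n). pose proof (c_annulus m' n').
  pose proof (aa_bound m n). pose proof (aa_bound m' n').
  pose proof (apos m n). pose proof (apos m' n').
  destruct (Compare_dec.lt_eq_lt_dec m m') as [[hlt | heq] | hgt].
  - pose proof (bb_order _ _ hlt). pose proof (bpos m').
    triY (f x) (f (c m' n')) (f (c m n)).
    rewrite (d_sym dY hdY (f (c m' n')) (f (c m n))) in T. lra.
  - subst m'. assert (hn : n <> n') by tauto. unfold aa in *.
    destruct (Nat.lt_gt_cases n n') as [[hlt | hlt] _]; auto.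
    + pose proof (aa_order m _ _ hlt). unfold aa in *.
      triY (y m) (f (c m n')) (f (c m n)).
      rewrite (d_sym dY hdY (f (c m n')) (f (c m n))) in T. lra.
    + pose proof (aa_order m _ _ hlt). unfold aa in *.
      triY (y m) (f (c m n)) (f (c m n')). lra.
  - pose proof (bb_order _ _ hgt). pose proof (bpos m).
    triY (f x) (f (c m n)) (f (c m' n')). lra.
Qed.

Lemma y_separated m m' n' : m' <> m -> aa m' n' / 4 + bb m / 2 <= dY (y m) (f (c m' n')).
Proof.
  intros hne. pose proof (c_annulus m' n'). pose proof (y_annulus m).
  pose proof (aa_bound m' n'). pose proof (bpos m'). pose proof (bpos m).
  destruct (Nat.lt_gt_cases m' m) as [[hlt | hlt] _]; auto;
    pose proof (bb_order _ _ hlt).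
  - triY (f x) (y m) (f (c m' n')). lra.
  - triY (f x) (f (c m' n')) (y m). rewrite (d_sym dY hdY (f (c m' n')) (y m)) in T. lra.
Qed.

Lemma children_correct :
  children_spec (mknode x dl Rr) children y.
Proof.
  constructor; unfold children; cbn [ctr yrad xrad].
  - intros m n. unfold node_ok; cbn [ctr yrad xrad].
    split; [apply hc |]. split; [pose proof (apos m n); lra |].
    apply Rmin_glb_lt; [lra | apply inv_pos].
  - intros m n. destruct (hc m n) as [_ [h _]]. pose proof (hxs m).
    triX x (xs m) (c m n). pose proof (Rmin_l (Rr / 2) (/ INR (S n))). lra.
  - intros m n. apply Rmin_r.
  - intros m n. pose proof (c_annulus m n). pose proof (aa_bound m n).
    pose proof (bb_bound m). lra.
  - apply children_separated.
  - intros m n. pose proof (c_annulus m n). pose proof (aa_bound m n).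
    pose proof (bpos m). lra.
  - intros m. pose proof (y_annulus m). pose proof (bb_bound m). lra.
  - intros m. exists (bb m / 2). pose proof (bpos m). split; [lra | split].
    + pose proof (y_annulus m). rewrite (d_sym dY hdY (y m) (f x)). lra.
    + intros m' n' hne. apply y_separated; auto.
  - intros m n. pose proof (apos m n). unfold aa in *. lra.
  - intros m e he. destruct (inv_tail e he) as [N HN]. exists N.
    pose proof (apos m N). pose proof (HN N (le_n _)). unfold aa in *. lra.
  - intros e he. destruct (inv_tail (8 * e / 9)) as [N HN]; [lra |]. exists N.
    pose proof (HN N (le_n _)). pose proof (y_annulus N). pose proof (bsmall N). lra.
  - intros m. apply cesc.
Qed.

End Children.

Lemma children_exist a : node_ok a -> exists ch ys, children_spec a ch ys.
Proof.
  destruct a as [x dl Rr]. intros [Kx [hdl hRr]]. cbn [ctr yrad xrad] in *.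
  destruct (fast_decreasing_seq (fun x' => K x' /\ dX x x' < Rr / 4)
              (fun x' => dY (f x) (f x')) (dl / 2)) as [xs [hxs [hxs0 hxsdec]]];
    [lra | intros e he; apply close_point_distinct_image; auto |].
  set (bb := fun m => dY (f x) (f (xs m))).
  assert (fam : forall m, exists cy : (nat -> X) * Y,
    (forall n, K (fst cy n) /\ dX (xs m) (fst cy n) <= Rr / 8 /\
               dY (f (xs m)) (f (fst cy n)) < bb m / 8) /\
    dY (f (xs m)) (snd cy) <= bb m / 8 /\
    (forall n, 0 < dY (snd cy) (f (fst cy n)) /\ dY (snd cy) (f (fst cy n)) < / INR (S n)) /\
    (forall n, dY (snd cy) (f (fst cy (S n))) < dY (snd cy) (f (fst cy n)) / 4) /\
    escapes dX (fst cy)).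
  { intros m. destruct (hxs m) as [[Kxm _] [hbm _]].
    destruct (escaping_sequence (xs m) (bb m / 8) (Rr / 8) Kxm) as [c [y hcy]];
      [unfold bb; lra | lra |].
    exists (c, y). exact hcy. }
  destruct (choice _ fam) as [cy hcy].
  exists (children Rr (fun m => fst (cy m)) (fun m => snd (cy m))), (fun m => snd (cy m)).
  apply (children_correct x dl Rr xs); auto; intros m; try apply hcy; try apply hxs.
Qed.

Lemma children_choice : exists step : node -> (nat -> nat -> node) * (nat -> Y),
  forall a, node_ok a -> children_spec a (fst (step a)) (snd (step a)).
Proof.
  apply (choice (fun a p => node_ok a -> children_spec a (fst p) (snd p))). intros a.
  destruct (classic (node_ok a)) as [ha | ha].
  - destruct (children_exist a ha) as [ch [ys h]]. exists (ch, ys). auto.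
  - exists (fun _ _ => a, fun _ => f (ctr a)). intros h. contradiction.
Qed.

Definition tree (step : node -> (nat -> nat -> node) * (nat -> Y)) (root : node)
  : list (nat * nat) -> node :=
  fix go l := match l with nil => root | p :: l' => fst (step (go l')) (fst p) (snd p) end.

Definition pair_dec : forall p q : nat * nat, {p = q} + {p <> q}.
Proof. decide equality; apply Nat.eq_dec. Defined.

Section Tree.
Variables (N : list (nat * nat) -> node) (ch : list (nat * nat) -> nat -> nat -> node)
  (ys : list (nat * nat) -> nat -> Y).
Hypothesis N_cons : forall m n l, N ((m, n) :: l) = ch l m n.
Hypothesis N_ok : forall l, node_ok (N l).
Hypothesis N_spec : forall l, children_spec (N l) (ch l) (ys l).

Lemma descendant_nested s l :
  dX (ctr (N s)) (ctr (N (l ++ s))) + xrad (N (l ++ s)) <= xrad (N s) /\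
  dY (f (ctr (N s))) (f (ctr (N (l ++ s)))) + yrad (N (l ++ s)) <= yrad (N s).
Proof.
  induction l as [| [m n] l [IH1 IH2]].
  - simpl. rewrite (d_refl dX hdX), (d_refl dY hdY). lra.
  - rewrite <- app_comm_cons, N_cons.
    pose proof (ch_xnest _ _ _ (N_spec (l ++ s)) m n).
    pose proof (ch_ynest _ _ _ (N_spec (l ++ s)) m n).
    triX (ctr (N s)) (ctr (N (l ++ s))) (ctr (ch (l ++ s) m n)).
    triY (f (ctr (N s))) (f (ctr (N (l ++ s)))) (f (ctr (ch (l ++ s) m n))). split; lra.
Qed.

Lemma descendant_image_close s l :
  dY (f (ctr (N s))) (f (ctr (N (l ++ s)))) <= yrad (N s).
Proof.
  destruct (descendant_nested s l) as [_ h]. destruct (N_ok (l ++ s)) as [_ [h2 _]]. lra.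
Qed.

(* The image of a node that is not a descendant of u lies outside the Y-ball
   of u: sibling balls are disjoint and each child avoids its parent. *)
Lemma non_descendant_far u v :
  (exists l, v = l ++ u) \/ yrad (N u) < dY (f (ctr (N u))) (f (ctr (N v))).
Proof.
  revert v. induction u as [| [m n] w IH]; intros v.
  { left. exists v. rewrite app_nil_r. auto. }
  destruct (IH v) as [[l ->] | h].
  - destruct (list_eq_dec pair_dec l nil) as [-> | hne].
    + right. cbn [app]. rewrite N_cons, (d_sym dY hdY).
      apply (ch_far_parent _ _ _ (N_spec w)).
    + destruct (exists_last hne) as [l' [[m' n'] ->]].
      rewrite <- app_assoc. cbn [app].
      destruct (pair_dec (m', n') (m, n)) as [heq | hne2].
      { left. exists l'. rewrite heq. auto. }
      right. assert (hmn : m <> m' \/ n <> n').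
      { destruct (Nat.eq_dec m m'); [subst; right; intros ->; apply hne2; auto | left; auto]. }
      pose proof (ch_sep _ _ _ (N_spec w) m n m' n' hmn).
      pose proof (descendant_image_close ((m', n') :: w) l'). rewrite !N_cons in *.
      destruct (N_ok (l' ++ (m', n') :: w)) as [_ [hp _]].
      triY (f (ctr (ch w m n))) (f (ctr (N (l' ++ (m', n') :: w)))) (f (ctr (ch w m' n'))).
      rewrite (d_sym dY hdY (f (ctr (N (l' ++ (m', n') :: w)))) (f (ctr (ch w m' n')))) in T.
      lra.
  - right. pose proof (descendant_image_close w ((m, n) :: nil)).
    cbn [app] in H. rewrite N_cons in *.
    triY (f (ctr (N w))) (f (ctr (ch w m n))) (f (ctr (N v))).
    pose proof (ch_ynest _ _ _ (N_spec w) m n). lra.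
Qed.

Lemma ys_isolated t m : exists e, 0 < e /\ forall v,
  (exists n l, v = l ++ (m, n) :: t) \/ e <= dY (ys t m) (f (ctr (N v))).
Proof.
  destruct (ys_sep _ _ _ (N_spec t) m) as [e8 [he8 [He8 He8']]].
  pose proof (ys_near _ _ _ (N_spec t) m).
  set (gap := yrad (N t) - dY (f (ctr (N t))) (ys t m)).
  exists (Rmin e8 gap). split; [apply Rmin_glb_lt; unfold gap; lra |].
  intros v. pose proof (Rmin_l e8 gap). pose proof (Rmin_r e8 gap). unfold gap in *.
  destruct (non_descendant_far t v) as [[l ->] | h].
  - destruct (list_eq_dec pair_dec l nil) as [-> | hne].
    + right. cbn [app]. lra.
    + destruct (exists_last hne) as [l' [[m' n'] ->]].
      rewrite <- app_assoc. cbn [app].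
      destruct (Nat.eq_dec m' m) as [-> | hne2]; [left; exists n', l'; auto |].
      right. pose proof (He8' m' n' hne2).
      pose proof (descendant_image_close ((m', n') :: t) l'). rewrite !N_cons in *.
      triY (ys t m) (f (ctr (N (l' ++ (m', n') :: t)))) (f (ctr (ch t m' n'))).
      rewrite (d_sym dY hdY (f (ctr (N (l' ++ (m', n') :: t)))) (f (ctr (ch t m' n')))) in T.
      lra.
  - right. triY (f (ctr (N t))) (ys t m) (f (ctr (N v))). lra.
Qed.

Definition tree_points : X -> Prop := fun z => exists l, z = ctr (N l).

(* No point ys t m is the image of a point of the closure of the tree: near
   such a point only finitely many subtrees (m, n) :: t can appear, since
   their X-radii shrink and their centres escape, and each of them keeps a
   positive distance from ys t m. *)
Lemma tree_closure_avoids_ys t m z : mclosure dX tree_points z -> f z <> ys t m.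
Proof.
  intros Fz hfz. destruct (ys_isolated t m) as [e [he He]].
  destruct (fcont z e he) as [eta1 [heta1 Heta1]].
  destruct (ch_escape _ _ _ (N_spec t) m z) as [eta2 [heta2 [N0 HN0]]].
  destruct (inv_tail (eta2 / 2)) as [N1 HN1]; [lra |].
  set (M := Nat.max N0 N1).
  assert (sub : forall l, dX z (ctr (N l)) < Rmin eta1 (eta2 / 2) ->
      exists n l', (n < M)%nat /\ l = l' ++ (m, n) :: t).
  { intros l hl. pose proof (Rmin_l eta1 (eta2 / 2)). pose proof (Rmin_r eta1 (eta2 / 2)).
    destruct (He l) as [[n [l' ->]] | h].
    - exists n, l'. split; auto. destruct (Nat.lt_ge_cases n M) as [hlt | hge]; auto. exfalso.
      pose proof (HN0 n ltac:(lia)). pose proof (HN1 n ltac:(lia)).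
      pose proof (ch_xsmall _ _ _ (N_spec t) m n).
      destruct (descendant_nested ((m, n) :: t) l') as [h1 _]. rewrite N_cons in h1.
      destruct (N_ok (l' ++ (m, n) :: t)) as [_ [_ hp]].
      triX z (ctr (N (l' ++ (m, n) :: t))) (ctr (ch t m n)).
      rewrite (d_sym dX hdX (ctr (N (l' ++ (m, n) :: t))) (ctr (ch t m n))) in T. lra.
    - exfalso. assert (dY (f z) (f (ctr (N l))) < e) by (apply Heta1; lra).
      rewrite hfz in H1. lra. }
  destruct (finite_min_pos (fun n => dY (ys t m) (f (ctr (ch t m n))) - yrad (ch t m n)))
    with (M := M) as [h [hh Hh]].
  { intros n. pose proof (ys_outside _ _ _ (N_spec t) m n). lra. }
  destruct (fcont z h hh) as [eta3 [heta3 Heta3]].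
  destruct (Fz (Rmin (Rmin eta1 (eta2 / 2)) eta3)) as [y0 [hl [l ->]]].
  { apply Rmin_glb_lt; [apply Rmin_glb_lt |]; lra. }
  pose proof (Rmin_l (Rmin eta1 (eta2 / 2)) eta3). pose proof (Rmin_r (Rmin eta1 (eta2 / 2)) eta3).
  destruct (sub l ltac:(lra)) as [n [l' [hn ->]]].
  pose proof (Hh n hn). pose proof (Heta3 (ctr (N (l' ++ (m, n) :: t))) ltac:(lra)) as H3.
  rewrite hfz in H3.
  pose proof (descendant_image_close ((m, n) :: t) l') as H4. rewrite N_cons in H4.
  triY (ys t m) (f (ctr (N (l' ++ (m, n) :: t)))) (f (ctr (ch t m n))).
  rewrite (d_sym dY hdY (f (ctr (N (l' ++ (m, n) :: t)))) (f (ctr (ch t m n)))) in T. lra.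
Qed.

(* The image A of the closure of the tree is not locally decided: on the
   closure C of the points ys, every open set meeting C contains some ys t m
   (not in A) and hence images of children of t (in A). *)
Lemma tree_image_not_decided : ~ locally_decided dY (image f (mclosure dX tree_points)).
Proof.
  intros hdec.
  set (C := mclosure dY (fun q => exists t m, q = ys t m)).
  assert (CY : forall t m, C (ys t m)) by (intros t m; apply (subset_closure dY hdY); eauto).
  assert (inF : forall l, mclosure dX tree_points (ctr (N l))).
  { intros l. apply (subset_closure dX hdX). exists l. auto. }
  destruct (hdec C (mclosed_closure dY hdY _) (ex_intro _ _ (CY nil 0%nat)))
    as [U [hU [[q [Uq Cq]] [hsub | hdis]]]];
    destruct (hU q Uq) as [e1 [he1 He1]];
    destruct (Cq e1 he1) as [y' [hy' [t [m ->]]]].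
  - destruct (hsub _ (He1 _ hy') (CY t m)) as [z [Fz hz]].
    exact (tree_closure_avoids_ys t m z Fz hz).
  - pose proof (He1 _ hy') as Uy. destruct (hU _ Uy) as [e2 [he2 He2]].
    destruct (ys_limit _ _ _ (N_spec t) m e2 he2) as [n hn].
    apply (hdis (f (ctr (ch t m n)))).
    + apply He2. auto.
    + intros e he. destruct (ys_converge _ _ _ (N_spec ((m, n) :: t)) e he) as [m' hm'].
      rewrite N_cons in hm'. exists (ys ((m, n) :: t) m'). split; eauto.
    + exists (ctr (ch t m n)). split; auto. rewrite <- N_cons. apply inF.
Qed.

End Tree.

Lemma nowhere_closed_empty
  (hdec : forall F, mclosed dX F -> locally_decided dY (image f F)) x0 : ~ K x0.
Proof.
  intros Kx0. destruct children_choice as [step hstep].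
  set (N := tree step (mknode x0 1 1)).
  assert (N_ok : forall l, node_ok (N l)).
  { induction l as [| [m n] l IH].
    - unfold node_ok. simpl. split; auto. lra.
    - apply (ch_ok _ _ _ (hstep _ IH)). }
  apply (tree_image_not_decided N (fun l => fst (step (N l))) (fun l => snd (step (N l))));
    auto.
  apply hdec, mclosed_closure, hdX.
Qed.

End Core.

Definition covered {X : Type} (good : (X -> Prop) -> Prop) (S : X -> Prop) : Prop :=
  exists Zs : nat -> X -> Prop, (forall n, good (Zs n)) /\ forall x, S x -> exists n, Zs n x.

Lemma covered_add {X : Type} (good : (X -> Prop) -> Prop) (P A B : X -> Prop) :
  good P -> covered good A -> (forall x, B x -> P x \/ A x) -> covered good B.
Proof.
  intros hP [Zs [hZs cov]] hB.
  exists (fun n => match n with O => P | S j => Zs j end). split.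
  - intros [| j]; auto.
  - intros x Bx. destruct (hB x Bx) as [Px | Ax]; [exists O; auto |].
    destruct (cov x Ax) as [n hn]. exists (S n). auto.
Qed.

Section Lindelof.
Context {X : Type} (dX : X -> X -> R) (hdX : is_metric dX) (D : X -> Prop)
  (Dcount : countable_set D) (Ddense : forall x e, 0 < e -> exists d, D d /\ dX x d < e).
Variable good : (X -> Prop) -> Prop.
Hypothesis good_empty : good (fun _ => False).

Definition locally_covered (x : X) : Prop :=
  exists r, 0 < r /\ covered good (fun y => dX x y <= r).

Lemma not_locally_covered_closed : mclosed dX (fun x => ~ locally_covered x).
Proof.
  intros x hx. apply NNPP in hx. destruct hx as [r [hr [Zs [h1 h2]]]].
  exists (r / 2). split; [lra |]. intros y hy hn. apply hn. exists (r / 2).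
  split; [lra |]. exists Zs. split; auto. intros z hz. apply h2.
  pose proof (d_tri dX hdX x y z). lra.
Qed.

(* Each of them
   lies in a ball B(d, 1/(k+1)) with d in the countable dense set whose
   closure is covered; there are countably many such pairs (d, k). *)
Lemma lindelof_cover : covered good locally_covered.
Proof.
  destruct Dcount as [g hg].
  set (ball_covered := fun d k => covered good (fun y => dX d y <= / INR (S k))).
  assert (H : forall p : nat * nat, exists Zs : nat -> X -> Prop, (forall j, good (Zs j)) /\
     (forall d, D d -> g d = fst p -> ball_covered d (snd p) ->
        forall x, dX d x <= / INR (S (snd p)) -> exists j, Zs j x)).
  { intros [n k]. cbn [fst snd].
    destruct (classic (exists d, D d /\ g d = n /\ ball_covered d k))
      as [[d0 [Dd0 [gd0 [Zs [h1 h2]]]]] | hn].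
    - exists Zs. split; auto. intros d Dd gd _ x hx.
      assert (d = d0) by (apply hg; auto; congruence). subst. auto.
    - exists (fun _ _ => False). split; auto.
      intros d Dd gd hM. exfalso. apply hn. exists d. auto. }
  destruct (choice _ H) as [ZZ hZZ].
  exists (fun i => ZZ (Cantor.of_nat (fst (Cantor.of_nat i))) (snd (Cantor.of_nat i))).
  split; [intros i; apply hZZ |].
  intros x [r [hr [Zs [h1 h2]]]].
  destruct (inv_tail (r / 2)) as [N HN]; [lra |]. pose proof (HN N (le_n _)) as hN.
  pose proof (inv_pos N) as hN0.
  destruct (Ddense x (/ INR (S N)) hN0) as [d [Dd hxd]].
  destruct (proj2 (hZZ (g d, N)) d Dd eq_refl) with (x := x) as [j hj]; cbn [fst snd].
  - exists Zs. split; auto. intros y hy. apply h2.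
    pose proof (d_tri dX hdX x d y). lra.
  - rewrite (d_sym dX hdX). lra.
  - exists (Cantor.to_nat (Cantor.to_nat (g d, N), j)).
    rewrite !Cantor.cancel_of_to. cbn [fst snd]. rewrite Cantor.cancel_of_to. exact hj.
Qed.

End Lindelof.

Lemma closed_on_of {X Y : Type} (opX : (X -> Prop) -> Prop) (opY : (Y -> Prop) -> Prop)
  (dX : X -> X -> R) (dY : Y -> Y -> R) (hopX : forall U, opX U <-> metric_open dX U)
  (hopY : forall U, opY U <-> metric_open dY U) (f : X -> Y) Z :
  mclosed dX Z -> mclosed_on dX dY f Z -> closed_on opX opY f Z.
Proof.
  intros hZ hm C [hCZ [F0 [hF0 hC]]]. apply hopY, hm; [exact hCZ |].
  intros x nCx. apply hopX in hF0.
  assert (h : ~ F0 x \/ ~ Z x).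
  { destruct (classic (F0 x)); [right | left]; auto. intros hz. apply nCx, hC. auto. }
  destruct h as [h | h]; [destruct (hF0 x h) as [e [he He]] | destruct (hZ x h) as [e [he He]]];
    exists e; split; auto; intros y hy Cy; apply (He y hy), hC, Cy.
Qed.

Lemma metric_continuous {X Y : Type} (opX : (X -> Prop) -> Prop) (opY : (Y -> Prop) -> Prop)
  (dX : X -> X -> R) (dY : Y -> Y -> R) (hdY : is_metric dY)
  (hopX : forall U, opX U <-> metric_open dX U)
  (hopY : forall U, opY U <-> metric_open dY U) (f : X -> Y) :
  continuous opX opY f ->
  forall x e, 0 < e -> exists eta, 0 < eta /\ forall y, dX x y < eta -> dY (f x) (f y) < e.
Proof.
  intros hf x e he.
  assert (hU : metric_open dX (fun y => dY (f x) (f y) < e))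
    by (apply hopX, (hf (fun z => dY (f x) z < e)), hopY, (mopen_ball dY hdY)).
  apply hU. rewrite (d_refl dY hdY). exact he.
Qed.

Lemma metric_dense {X : Type} (opX : (X -> Prop) -> Prop) (dX : X -> X -> R)
  (hdX : is_metric dX) (hopX : forall U, opX U <-> metric_open dX U) (D : X -> Prop) :
  dense opX D -> forall x e, 0 < e -> exists d, D d /\ dX x d < e.
Proof.
  intros hD x e he. destruct (hD (fun y => dX x y < e)) as [d [hxd Dd]].
  - apply hopX, (mopen_ball dX hdX).
  - exists x. rewrite (d_refl dX hdX). exact he.
  - exists d. auto.
Qed.

Theorem theorem1 (X Y : Type) (opX : (X -> Prop) -> Prop) (opY : (Y -> Prop) -> Prop)
  (hX : metrizable opX) (hXs : separable opX)
  (hY : metrizable opY) (hYs : separable opY)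
  (f : X -> Y) (hf : continuous opX opY f)
  (hsurj : forall y, exists x, f x = y)
  (hcc : closed_constructible opX opY f) :
  piecewise_closed opX opY f.
Proof.
  destruct hX as [dX [hdX hopX]], hY as [dY [hdY hopY]], hXs as [D [Dcount hD]].
  pose proof (metric_continuous opX opY dX dY hdY hopX hopY f hf) as fcont.
  assert (hdec : forall F, mclosed dX F -> locally_decided dY (image f F)).
  { intros F hF. apply (constructible_locally_decided dY hdY opY hopY), hcc, hopX, hF. }
  set (good := fun Z => mclosed dX Z /\ mclosed_on dX dY f Z).
  assert (good_empty : good (fun _ => False)).
  { split; [apply mclosed_empty |]. intros C hC _ y _. exists 1.
    split; [lra |]. intros z _ [c [Cc _]]. exact (hC c Cc). }
  destruct (lindelof_cover dX hdX D Dcount (metric_dense opX dX hdX hopX D hD) good good_empty)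
    as [Zs [hgood hcov]].
  set (B := fun x => ~ locally_covered dX good x).
  assert (B_empty : forall x, ~ B x).
  { apply (nowhere_closed_empty dX dY hdX hdY f fcont B); auto.
    intros x Bx r hr hm. apply Bx. exists r. split; auto.
    apply (covered_add good (fun y => B y /\ dX x y <= r) (locally_covered dX good)).
    - split; auto. apply (mclosed_inter dX); [apply not_locally_covered_closed, hdX |
                                                  apply (mclosed_cball dX hdX)].
    - exists Zs. auto.
    - intros y hy. destruct (classic (B y)); [left | right]; auto. apply NNPP; auto. }
  exists Zs. split; [| split].
  - intros n. apply hopX, hgood.
  - intros x. apply hcov, NNPP, B_empty.
  - intros n. apply (closed_on_of opX opY dX dY hopX hopY); apply hgood.
Qed.
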